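(* Let $d$ be a Hardy type series derivation on $\mathbb{K}$. Let $\alpha\in\Gamma$ with $\alpha\neq\hat\theta$ (this condition being vacuous if $\hat\theta$ does not exist). Then there exists a unique fundamental monomial $\psi_\alpha\in\Phi$ such that $\mathrm{LF}\big(\alpha/\theta^{(\psi_\alpha)}\big)=\psi_\alpha$.
   Context: Let $(\Phi,\preccurlyeq)$ be a totally ordered set; $\mathbf{H}(\Phi)$ is the group of formal products $\gamma=\prod_{\phi}\phi^{\gamma_\phi}$, $\gamma_\phi\in\mathbb{R}$, with anti-well-ordered support $\operatorname{supp}\gamma=\{\phi:\gamma_\phi\neq0\}$, pointwise multiplication and anti-lexicographic order ($\gamma\succ1$ iff the exponent of $\max\operatorname{supp}\gamma$ is positive); $\Phi\subseteq\mathbf H(\Phi)$ via $\phi=\phi^1$ (fundamental monomials). Fix a subgroup $\Gamma\supseteq\Phi$. $\mathrm{LF}(\gamma)=\max\operatorname{supp}\gamma$ for $\gamma\ne1$, $\mathrm{LF}(1)=1$. $\mathbb{K}=\mathbb{R}((\Gamma))$: formal series with anti-well-ordered support in $\Gamma$; $\mathrm{LM}(a)$ = largest monomial of the support; $a\preccurlyeq b$ iff $\mathrm{LM}(a)\preccurlyeq\mathrm{LM}(b)$, $a\asymp b$ iff equal leading monomials; $|a|=\max(\mathrm{LM}(a),\mathrm{LM}(a)^{-1})$; $a,b\succ 1$ comparable iff $\mathrm{LF}(\mathrm{LM}(a))=\mathrm{LF}(\mathrm{LM}(b))$. Summable families: union of supports anti-well-ordered, each monomial in finitely many supports. A series derivation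 is a map $a\mapsto a'$ on $\mathbb{K}$ with $1'=0$, $\alpha'=\alpha\sum_{\phi\in\operatorname{supp}\alpha}\alpha_\phi\phi'/\phi$ for $\alpha=\prod\phi^{\alpha_\phi}\in\Gamma$, and $a'=\sum a_\alpha\alpha'$ (summable families). Hardy type: (HD1) constants are exactly $\mathbb{R}$; (HD2) for $a,b\in\mathbb{K}^*$, $a,b\not\asymp 1$: $a\preccurlyeq b\iff a'\preccurlyeq b'$; (HD3) for $|a|\succ|b|\succ1$: $a'/a\succcurlyeq b'/b$, with $\asymp$ iff $a,b$ comparable. $\theta^{(\phi)}=\mathrm{LM}(\phi'/\phi)$ for $\phi\in\Phi$; $\hat\theta$ is the greatest lower bound of $\{\theta^{(\phi)}:\phi\in\Phi\}$ in $(\Gamma,\preccurlyeq)$ if it exists. *)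

From mathcomp Require Import all_boot all_order all_algebra.
From mathcomp Require Import all_classical all_reals.
Set Implicit Arguments. Unset Strict Implicit. Unset Printing Implicit Defensive.
Import Order.TTheory GRing.Theory Num.Theory.
Local Open Scope classical_set_scope.
Local Open Scope ring_scope.

Section Hardy.
Variables (R : realType) (disp : Order.disp_t) (Phi : orderType disp).

Definition anti_wo {T : Type} (le : T -> T -> Prop) (S : set T) : Prop :=
  forall A : set T, A `<=` S -> A !=set0 -> exists2 m, A m & forall x, A x -> le x m.

(* Monomials: formal products prod_phi phi^(g phi), represented by their
   exponent function g : Phi -> R.  The group law of H(Phi) is pointwise
   addition of exponents. *)
Definition mon := Phi -> R.
Definition msupp (g : mon) : set Phi := [set p | g p != 0].
Definition hahn (g : mon) : Prop := anti_wo (fun x y : Phi => (x <= y)%O) (msupp g).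
Definition mon1 : mon := fun _ => 0.
Definition mmul (g h : mon) : mon := fun p => g p + h p.
Definition minv (g : mon) : mon := fun p => - g p.
Definition mdiv (g h : mon) : mon := fun p => g p - h p.
Definition fund (phi : Phi) : mon := fun p => if p == phi then 1 else 0.

Definition is_LF (g : mon) (phi : Phi) : Prop :=
  g phi != 0 /\ forall p, g p != 0 -> (p <= phi)%O.
(* LF(g) = Some (max supp g) for g <> 1, and None (standing for 1) for g = 1 *)
Definition LF (g : mon) : option Phi :=
  match pselect (exists phi, is_LF g phi) with
  | left h => Some (projT1 (cid h))
  | right _ => None
  end.

Definition mgt1 (g : mon) : Prop := exists phi, is_LF g phi /\ 0 < g phi.
Definition mle (g h : mon) : Prop := g = h \/ mgt1 (mdiv h g).
Definition mlt (g h : mon) : Prop := mle g h /\ g <> h.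
Definition mabs (g : mon) : mon := if `[< mgt1 g >] then g else minv g.

Definition good_group (Gam : set mon) : Prop :=
  [/\ forall g, Gam g -> hahn g,
      Gam mon1,
      forall g h, Gam g -> Gam h -> Gam (mdiv g h)
    & forall phi, Gam (fund phi)].

(* Series: coefficient functions on monomials; K = R((Gam)) is the set of
   those with anti-well-ordered support contained in Gam. *)
Definition ser := mon -> R.
Definition ssupp (a : ser) : set mon := [set g | a g != 0].
Definition is_series (Gam : set mon) (a : ser) : Prop :=
  ssupp a `<=` Gam /\ anti_wo mle (ssupp a).
Definition szero : ser := fun _ => 0.
Definition sscale (r : R) (a : ser) : ser := fun g => r * a g.
Definition mono (g : mon) : ser := fun h => if `[< h = g >] then 1 else 0.
Definition smulm (a : ser) (g : mon) : ser := fun h => a (mdiv h g).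
Definition sdivm (a : ser) (g : mon) : ser := fun h => a (mmul h g).

(* leading monomial (LM 0 := 1 is an irrelevant default) *)
Definition is_LM (a : ser) (g : mon) : Prop :=
  a g != 0 /\ forall h, a h != 0 -> mle h g.
Definition LM (a : ser) : mon :=
  match pselect (exists g, is_LM a g) with
  | left h => projT1 (cid h)
  | right _ => mon1
  end.

Definition summable (Gam : set mon) {I : choiceType} (F : I -> ser) : Prop :=
  anti_wo mle (\bigcup_(i in setT) ssupp (F i)) /\
  forall g, finite_set [set i | F i g != 0].
Definition fsum {I : choiceType} (F : I -> ser) : ser :=
  fun g => \sum_(i \in [set: I]) F i g.

Definition series_derivation (Gam : set mon) (D : ser -> ser) : Prop :=
  [/\ forall a, is_series Gam a -> is_series Gam (D a),
      D (mono mon1) = szero,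
      forall alpha, Gam alpha ->
        let F := fun phi : Phi =>
          sscale (alpha phi) (sdivm (D (mono (fund phi))) (fund phi)) in
        summable Gam F /\ D (mono alpha) = smulm (fsum F) alpha
    & forall a, is_series Gam a ->
        let F := fun g : mon => sscale (a g) (D (mono g)) in
        summable Gam F /\ D a = fsum F].

Definition sle (a b : ser) : Prop := mle (LM a) (LM b).
Definition sasymp (a b : ser) : Prop := LM a = LM b.
Definition constant (a : ser) : Prop := ssupp a `<=` [set mon1].
(* leading monomial of a'/a, i.e. LM(a') / LM(a) *)
Definition LMlogder (D : ser -> ser) (a : ser) : mon := mdiv (LM (D a)) (LM a).

Definition hardy_type (Gam : set mon) (D : ser -> ser) : Prop :=
  [/\
      forall a, is_series Gam a -> (D a = szero <-> constant a),
      forall a b, is_series Gam a -> is_series Gam b ->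
        a <> szero -> b <> szero -> LM a <> mon1 -> LM b <> mon1 ->
        (sle a b <-> sle (D a) (D b))
    &
      forall a b, is_series Gam a -> is_series Gam b ->
        a <> szero -> b <> szero ->
        mlt (mabs (LM b)) (mabs (LM a)) -> mlt mon1 (mabs (LM b)) ->
        mle (LMlogder D b) (LMlogder D a) /\
        (LMlogder D a = LMlogder D b <-> LF (LM a) = LF (LM b))].

Definition theta (D : ser -> ser) (phi : Phi) : mon :=
  LM (sdivm (D (mono (fund phi))) (fund phi)).

Definition is_theta_hat (Gam : set mon) (D : ser -> ser) (t : mon) : Prop :=
  [/\ Gam t,
      forall phi, mle t (theta D phi)
    & forall u, Gam u -> (forall phi, mle u (theta D phi)) -> mle u t].

End Hardy.

From mathcomp Require Import all_boot all_order all_algebra.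
From mathcomp Require Import all_classical all_reals.
From mathcomp Require Import ring.
Set Implicit Arguments. Unset Strict Implicit. Unset Printing Implicit Defensive.
Import Order.TTheory GRing.Theory Num.Theory.
Local Open Scope classical_set_scope.
Local Open Scope ring_scope.

(* Two consequences of (HD2) and (HD3) drive the proof: for chi < phi,
   theta^(chi) < theta^(phi), and the quotient theta^(phi)/theta^(chi) only
   involves fundamental monomials below phi.  Hence LF(alpha/theta^(psi)) = psi
   has at most one solution psi, and if LF(alpha/theta^(psi)) = c >= psi for
   some psi, then c is a solution.  In the remaining case
   LF(alpha/theta^(psi)) < psi for every psi, and this forces alpha to be the
   greatest lower bound hat-theta of the theta^(psi). *)

Section Monomials.
Variables (R : realType) (disp : Order.disp_t) (Phi : orderType disp).
Implicit Types (x y z : mon R Phi) (a b c p : Phi).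
Local Notation one := (@mon1 R disp Phi).

Definition msupp_lt x c := forall p, x p != 0 -> (p < c)%O.

Lemma is_LF_uniq x a b : is_LF x a -> is_LF x b -> a = b.
Proof. by move=> [xa Ha] [xb Hb]; apply/le_anti; rewrite Hb // Ha. Qed.

Lemma LF_SomeP x a : LF x = Some a <-> is_LF x a.
Proof.
rewrite /LF; case: pselect => [e|none]; split => //.
- by move=> [<-]; exact: projT2 (cid e).
- by move=> la; congr Some; apply: is_LF_uniq (projT2 (cid e)) la.
- by move=> la; exfalso; apply: none; exists a.
Qed.

Lemma is_LF_neq1 x c : is_LF x c -> x <> one.
Proof. by move=> [xc _] x1; move: xc; rewrite x1 eqxx. Qed.

Lemma is_LF_opp x z a : is_LF x a -> (forall p, z p = - x p) -> is_LF z a.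
Proof.
by move=> [xa Ha] ez; split=> [|p]; rewrite ez oppr_eq0 //; apply: Ha.
Qed.

Lemma msupp_lt_opp x z c : msupp_lt x c -> (forall p, z p = - x p) -> msupp_lt z c.
Proof. by move=> sx ez p; rewrite ez oppr_eq0; apply: sx. Qed.

Lemma is_LF_add_small x y z c : is_LF x c -> msupp_lt y c ->
  (forall p, z p = x p + y p) -> is_LF z c /\ z c = x c.
Proof.
move=> [xc Hx] sy ez.
have yc : y c = 0 by apply/eqP; apply: contraT => /sy; rewrite ltxx.
have zc : z c = x c by rewrite ez yc addr0.
split=> //; split=> [|p]; first by rewrite zc.
rewrite ez; have [->|xp] := eqVneq (x p) 0; last by move=> _; apply: Hx.
by rewrite add0r => /sy /ltW.
Qed.

Lemma is_LF_add_pos x y z a b : is_LF x a -> 0 < x a -> is_LF y b -> 0 < y b ->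
  (forall p, z p = x p + y p) ->
  is_LF z (Order.max a b) /\ 0 < z (Order.max a b).
Proof.
move=> la pa lb pb ez.
wlog ab : x y a b la pa lb pb ez / (a <= b)%O.
  move=> gen; case/orP: (le_total a b) => ab; first exact: (gen x y a b).
  by rewrite maxC; apply: (gen y x b a) => // p; rewrite ez addrC.
rewrite (max_idPr ab).
have zb : 0 < z b.
  rewrite ez; move: ab; rewrite le_eqVlt => /orP[/eqP eab|ab].
    by subst b; exact: addr_gt0.
  have xb : x b = 0 by apply/eqP; apply: contraTT ab => /(proj2 la); rewrite -leNgt.
  by rewrite xb add0r.
split=> //; split=> [|p]; first by rewrite gt_eqF.
rewrite ez; have [->|xp] := eqVneq (x p) 0; first by rewrite add0r => /(proj2 lb).
by move=> _; apply: le_trans (proj2 la _ xp) ab.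
Qed.

Lemma mgt1_LF x a : is_LF x a -> mgt1 x <-> 0 < x a.
Proof.
move=> la; split=> [[b [lb pb]]|pa]; last by exists a.
by rewrite (is_LF_uniq la lb).
Qed.

Lemma mle_refl x : mle x x.
Proof. by left. Qed.

Lemma mle_anti x y : mle x y -> mle y x -> x = y.
Proof.
move=> [//|[a [la pa]]] [//|[b [lb pb]]].
have la' : is_LF (mdiv x y) a by apply: (is_LF_opp la) => p; rewrite /mdiv opprB.
rewrite -(is_LF_uniq la' lb) /mdiv -opprB oppr_gt0 in pb.
by move: (lt_trans pa pb); rewrite ltxx.
Qed.

Lemma mle_trans x y z : mle x y -> mle y z -> mle x z.
Proof.
move=> [<-//|[a [la pa]]] [<-|[b [lb pb]]]; first by right; exists a.
have [lc pc] := is_LF_add_pos la pa lb pb (z := mdiv z x)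
  (fun p => ltac:(rewrite /mdiv; ring)).
by right; exists (Order.max a b).
Qed.

Lemma mle_mmul2l x y z : mle x y -> mle (mmul z x) (mmul z y).
Proof.
move=> [<-|xy]; [exact: mle_refl|right].
by rewrite (_ : mdiv _ _ = mdiv y x) //; apply/funext => p; rewrite /mdiv /mmul; ring.
Qed.

Lemma mlt_mmul_mgt1 x y : mgt1 y -> mlt x (mmul x y).
Proof.
move=> y1; have eyx : mdiv (mmul x y) x = y.
  by apply/funext => p; rewrite /mdiv /mmul addrAC subrr add0r.
split; first by right; rewrite eyx.
move=> exy; have [a [la pa]] := y1.
by move: pa; rewrite -eyx -exy /mdiv subrr ltxx.
Qed.

Lemma not_mle1_LF_lt0 x c : is_LF x c -> x c < 0 -> ~ mle one x.
Proof.
move=> lx xc [x1|]; first exact: is_LF_neq1 lx (esym x1).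
rewrite (_ : mdiv x one = x); last by apply/funext => p; rewrite /mdiv /mon1 subr0.
by move/(mgt1_LF lx) => /(lt_trans xc); rewrite ltxx.
Qed.

Lemma mlt1_LF x a : is_LF x a -> 0 < x a -> mlt one x.
Proof.
move=> la pa; split; last by move=> x1; move: pa; rewrite -x1 /mon1 ltxx.
right; rewrite (_ : mdiv x one = x); last by apply/funext => p; rewrite /mdiv /mon1 subr0.
exact/(mgt1_LF la).
Qed.

Lemma mabs_mgt1 x : mgt1 x -> mabs x = x.
Proof. by move=> x1; rewrite /mabs asboolT. Qed.

Lemma is_LF_mabs x a : is_LF x a -> is_LF (mabs x) a /\ 0 < mabs x a.
Proof.
move=> la; rewrite /mabs; case: asboolP => [/(mgt1_LF la)//|xle1].
have xa : x a < 0.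
  case: (ltgtP (x a) 0) => // [xa|xa]; first by exfalso; apply/xle1/(mgt1_LF la).
  by case: la; rewrite xa eqxx.
by split; [exact: is_LF_opp la _|rewrite /minv oppr_gt0].
Qed.

Lemma fund_id a : fund R a a = 1.
Proof. by rewrite /fund eqxx. Qed.

Lemma is_LF_fund a : is_LF (fund R a) a.
Proof.
split=> [|p]; first by rewrite fund_id oner_eq0.
by rewrite /fund; case: (eqVneq p a) => [->|]; rewrite ?eqxx.
Qed.

Lemma LF_fund a : LF (fund R a) = Some a.
Proof. exact/LF_SomeP/is_LF_fund. Qed.

Lemma mgt1_fund a : mgt1 (fund R a).
Proof. by apply/(mgt1_LF (is_LF_fund a)); rewrite fund_id ltr01. Qed.

Lemma mabs_fund a : mabs (fund R a) = fund R a.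
Proof. exact/mabs_mgt1/mgt1_fund. Qed.

Lemma mlt1_fund a : mlt one (fund R a).
Proof. by apply: (mlt1_LF (is_LF_fund a)); rewrite fund_id ltr01. Qed.

Lemma mlt_fund x a c : is_LF x c -> 0 < x c -> (a < c)%O -> mlt (fund R a) x.
Proof.
move=> lx pc ac.
have small : msupp_lt (minv (fund R a)) c.
  move=> p; rewrite /minv oppr_eq0 => /(proj2 (is_LF_fund a)) pa.
  exact: le_lt_trans pa ac.
have [lz ez] := is_LF_add_small lx small (z := mdiv x (fund R a)) (fun p => erefl).
split; first by right; exists c; rewrite ez.
move=> ex; move: pc; rewrite -ex /fund.
by case: eqP => [ca|_]; [move: ac; rewrite ca ltxx|rewrite ltxx].
Qed.

Section Group.
Variable Gam : set (mon R Phi).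
Hypothesis hG : good_group Gam.

Lemma group_hahn x : Gam x -> hahn x.
Proof. by case: hG => h _ _ _; apply: h. Qed.

Lemma group_mdiv x y : Gam x -> Gam y -> Gam (mdiv x y).
Proof. by case: hG => _ _ h _; apply: h. Qed.

Lemma group_minv x : Gam x -> Gam (minv x).
Proof.
move=> hx; rewrite (_ : minv x = mdiv one x).
  by apply: group_mdiv => //; case: hG.
by apply/funext => p; rewrite /minv /mdiv /mon1 sub0r.
Qed.

Lemma group_mmul x y : Gam x -> Gam y -> Gam (mmul x y).
Proof.
move=> hx hy; rewrite (_ : mmul x y = mdiv x (minv y)).
  exact: group_mdiv (group_minv hy).
by apply/funext => p; rewrite /minv /mdiv /mmul opprK.
Qed.

Lemma group_fund a : Gam (fund R a).
Proof. by case: hG. Qed.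

Lemma group_mabs x : Gam x -> Gam (mabs x).
Proof. by move=> hx; rewrite /mabs; case: asboolP => _ //; apply: group_minv. Qed.

Lemma hahn_LF x p : hahn x -> x p != 0 -> exists c, is_LF x c.
Proof.
move=> hx xp; have [|c xc Hc] := hx (msupp x) (fun _ q => q); first by exists p.
by exists c; split=> // q xq; apply: Hc.
Qed.

Lemma mle_total x y : Gam x -> Gam y -> mle x y \/ mle y x.
Proof.
move=> hx hy; have [->|[p yxp]] : y = x \/ exists p, mdiv y x p != 0.
- case: (pselect (exists p, mdiv y x p != 0)) => [|none]; [by right|left].
  apply/funext => p; apply/eqP; rewrite -subr_eq0.
  by apply/negPn/negP => yxp; apply: none; exists p.
- by left; exact: mle_refl.
have [c lc] := hahn_LF (group_hahn (group_mdiv hy hx)) yxp.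
case: (ltgtP 0 (mdiv y x c)) => [pos|neg|zero].
- by left; right; exists c.
- right; right; exists c; split; first by apply: (is_LF_opp lc) => q; rewrite /mdiv opprB.
  by rewrite /mdiv -opprB oppr_gt0.
- by move: lc.1; rewrite -zero eqxx.
Qed.

End Group.
End Monomials.

Section LeadingFundamentalFixedPoint.
Variables (R : realType) (disp : Order.disp_t) (Phi : orderType disp).
Variables (Gam : set (mon R Phi)) (th : Phi -> mon R Phi) (alpha : mon R Phi).
Implicit Types (a b c : Phi).

Definition is_mglb t := [/\ Gam t, forall a, mle t (th a)
  & forall u, Gam u -> (forall a, mle u (th a)) -> mle u t].

Hypotheses (hG : good_group Gam) (halpha : Gam alpha) (th_in : forall a, Gam (th a)).
Hypothesis th_mgt1 : forall a b, (b < a)%O -> mgt1 (mdiv (th a) (th b)).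
Hypothesis th_supp_lt : forall a b, (b < a)%O -> msupp_lt (mdiv (th a) (th b)) a.

Lemma is_LF_div_th_lt a b :
  (a < b)%O -> is_LF (mdiv alpha (th b)) b -> is_LF (mdiv alpha (th a)) b.
Proof.
move=> ab lb; apply: (proj1 (is_LF_add_small lb (th_supp_lt ab) _)) => p.
by rewrite /mdiv; ring.
Qed.

Lemma is_LF_div_th_uniq a b :
  is_LF (mdiv alpha (th a)) a -> is_LF (mdiv alpha (th b)) b -> a = b.
Proof.
move=> la lb; case: (ltgtP a b) => // [ab|ba].
- exact: is_LF_uniq la (is_LF_div_th_lt ab lb).
- exact/esym/(is_LF_uniq lb (is_LF_div_th_lt ba la)).
Qed.

Lemma is_LF_div_th_le a c :
  is_LF (mdiv alpha (th a)) c -> (a <= c)%O -> is_LF (mdiv alpha (th c)) c.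
Proof.
move=> lc; rewrite le_eqVlt => /orP[/eqP ac|ac]; first by subst c.
have small : msupp_lt (mdiv (th a) (th c)) c.
  by apply: (msupp_lt_opp (th_supp_lt ac)) => p; rewrite /mdiv opprB.
by apply: (proj1 (is_LF_add_small lc small _)) => p; rewrite /mdiv; ring.
Qed.

Lemma is_mglb_of_LF_lt :
  (forall a c, is_LF (mdiv alpha (th a)) c -> (c < a)%O) -> is_mglb alpha.
Proof.
move=> LF_lt; split=> // [a|u hu u_lb].
- case: (mle_total hG halpha (th_in a)) => // -[->|[c [lc pc]]]; first exact: mle_refl.
  have [d [ld pd]] := th_mgt1 (LF_lt _ _ lc).
  have [le _] := is_LF_add_pos lc pc ld pd (z := mdiv alpha (th c))
    (fun p => ltac:(rewrite /mdiv; ring)).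
  by have := LF_lt _ _ le; rewrite ltNge le_max lexx.
- have small a : msupp_lt (mdiv alpha (th a)) a.
    move=> p ap; have hahn_a := group_hahn hG (group_mdiv hG halpha (th_in a)).
    have [c lc] := hahn_LF hahn_a ap.
    exact: le_lt_trans (proj2 lc _ ap) (LF_lt _ _ lc).
  case: (mle_total hG hu halpha) => // -[->|[c [lc pc]]]; first exact: mle_refl.
  have [lz ez] := is_LF_add_small lc (small c) (z := mdiv u (th c))
    (fun p => ltac:(rewrite /mdiv; ring)).
  have th_le_u : mle (th c) u by right; exists c; rewrite ez.
  by case: lz; rewrite (mle_anti (u_lb c) th_le_u) /mdiv subrr eqxx.
Qed.

Theorem exists_unique_LF_div_th :
  ~ is_mglb alpha -> exists! psi, LF (mdiv alpha (th psi)) = Some psi.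
Proof.
move=> not_glb; suff [psi lpsi] : exists psi, is_LF (mdiv alpha (th psi)) psi.
  exists psi; split=> [|a /LF_SomeP la]; first exact/LF_SomeP.
  exact: is_LF_div_th_uniq lpsi la.
apply: contrapT => none; apply/not_glb/is_mglb_of_LF_lt => a c lc.
by rewrite ltNge; apply/negP => ac; apply: none; exists c; exact: is_LF_div_th_le lc ac.
Qed.

End LeadingFundamentalFixedPoint.

Section Series.
Variables (R : realType) (disp : Order.disp_t) (Phi : orderType disp).
Implicit Types (a : ser R Phi) (x y m : mon R Phi).

Lemma is_LM_uniq a x y : is_LM a x -> is_LM a y -> x = y.
Proof. by move=> [ax Hx] [ay Hy]; apply: mle_anti; [apply: Hy|apply: Hx]. Qed.

Lemma LM_is_LM a x : is_LM a x -> LM a = x.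
Proof.
move=> ax; rewrite /LM; case: pselect => [e|none]; last by exfalso; apply: none; exists x.
exact: is_LM_uniq (projT2 (cid e)) ax.
Qed.

Lemma is_LM_LM (Gam : set (mon R Phi)) a :
  is_series Gam a -> a <> @szero R _ Phi -> is_LM a (LM a).
Proof.
move=> [_ wo] a0; have [x ax] : exists x, a x != 0.
  apply: contra_notP a0 => none; apply/funext => x; apply/eqP.
  by apply: contraT => ax; exfalso; apply: none; exists x.
have [m am Hm] := wo (ssupp a) (fun _ q => q) (ex_intro _ x ax).
by rewrite (LM_is_LM (x := m)) //; split.
Qed.

Lemma is_LM_sdivm a m x : is_LM a m -> is_LM (sdivm a x) (mdiv m x).
Proof.
move=> [am Hm]; split=> [|y].
  by rewrite /sdivm (_ : mmul _ x = m) //; apply/funext => p; rewrite /mmul /mdiv subrK.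
rewrite /sdivm => /Hm /(mle_mmul2l (minv x)).
rewrite (_ : mmul _ (mmul y x) = y); last by apply/funext => p; rewrite /mmul /minv; ring.
rewrite (_ : mmul _ m = mdiv m x) //.
by apply/funext => p; rewrite /mmul /minv /mdiv; ring.
Qed.

Lemma mono_id x : mono x x = 1.
Proof. by rewrite /mono asboolT. Qed.

Lemma mono_supp x y : mono x y != 0 -> y = x.
Proof. by rewrite /mono; case: asboolP => // _; rewrite eqxx. Qed.

Lemma mono_neq0 x : mono x <> @szero R _ Phi.
Proof.
by move=> e; have := mono_id x; rewrite e /szero => /eqP; rewrite eq_sym oner_eq0.
Qed.

Lemma mono_series (Gam : set (mon R Phi)) x : Gam x -> is_series Gam (mono x).
Proof.
move=> hx; split=> [y /mono_supp -> //|A sA [y Ay]].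
exists x; first by rewrite -(mono_supp (sA _ Ay)).
by move=> z /sA /mono_supp ->; exact: mle_refl.
Qed.

Lemma LM_mono x : LM (mono x) = x.
Proof.
apply: LM_is_LM; split=> [|y /mono_supp ->]; last exact: mle_refl.
by rewrite mono_id oner_neq0.
Qed.

End Series.

Section HardyType.
Variables (R : realType) (disp : Order.disp_t) (Phi : orderType disp).
Variables (Gam : set (mon R Phi)) (D : ser R Phi -> ser R Phi).
Implicit Types (x y u v : mon R Phi) (a b c : Phi).
Local Notation one := (@mon1 R disp Phi).

Definition mlogder x := LMlogder D (mono x).

Lemma LM_D_mono x : LM (D (mono x)) = mmul x (mlogder x).
Proof.
by rewrite /mlogder /LMlogder LM_mono; apply/funext => p; rewrite /mmul /mdiv; ring.
Qed.

Hypotheses (hG : good_group Gam) (hD : series_derivation Gam D) (hH : hardy_type Gam D).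

Lemma D_mono_neq0 x : Gam x -> x <> one -> D (mono x) <> @szero R _ Phi.
Proof.
case: hH => HD1 _ _ hx x1 /(HD1 _ (mono_series hx)) cst; apply: x1.
by apply: cst; rewrite /ssupp /= mono_id oner_neq0.
Qed.

Lemma is_LM_D_mono x : Gam x -> x <> one ->
  is_LM (D (mono x)) (LM (D (mono x))) /\ Gam (LM (D (mono x))).
Proof.
move=> hx x1; have [Dser _ _ _] := hD.
have [supp _] := Dser _ (mono_series hx).
have lm := is_LM_LM (Dser _ (mono_series hx)) (D_mono_neq0 hx x1).
by split=> //; apply: supp; case: lm.
Qed.

Lemma mlogder_in x : Gam x -> x <> one -> Gam (mlogder x).
Proof.
move=> hx x1; rewrite /mlogder /LMlogder LM_mono.
exact: (group_mdiv hG (is_LM_D_mono hx x1).2 hx).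
Qed.

Lemma thetaE a : theta D a = mlogder (fund R a).
Proof.
rewrite /mlogder /LMlogder LM_mono; apply/LM_is_LM/is_LM_sdivm.
exact: (is_LM_D_mono (group_fund hG a) (is_LF_neq1 (is_LF_fund R a))).1.
Qed.

Lemma theta_in a : Gam (theta D a).
Proof.
by rewrite thetaE; apply: mlogder_in (group_fund hG a) (is_LF_neq1 (is_LF_fund R a)).
Qed.

Lemma HD2_mono x y : Gam x -> Gam y -> x <> one -> y <> one ->
  mle x y -> mle (mmul x (mlogder x)) (mmul y (mlogder y)).
Proof.
case: hH => _ HD2 _ hx hy x1 y1 xy; rewrite -!LM_D_mono.
have := HD2 _ _ (mono_series hx) (mono_series hy)
  (@mono_neq0 _ _ _ x) (@mono_neq0 _ _ _ y).
by rewrite /sle !LM_mono => /(_ x1 y1) [+ _]; apply.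
Qed.

Lemma HD3_mono x y : Gam x -> Gam y ->
  mlt (mabs y) (mabs x) -> mlt one (mabs y) ->
  mle (mlogder y) (mlogder x) /\ (mlogder x = mlogder y <-> LF x = LF y).
Proof.
case: hH => _ _ HD3 hx hy.
have := HD3 _ _ (mono_series hx) (mono_series hy)
  (@mono_neq0 _ _ _ x) (@mono_neq0 _ _ _ y).
by rewrite !LM_mono.
Qed.

Lemma mlogder_mlt_LF x y c : Gam x -> Gam y -> is_LF x c -> is_LF y c ->
  mlt (mabs y) (mabs x) -> mlogder x = mlogder y.
Proof.
move=> hx hy lx ly yx; have [lay pay] := is_LF_mabs ly.
have [_ ->] := HD3_mono hx hy yx (mlt1_LF lay pay).
by have /LF_SomeP -> := lx; have /LF_SomeP -> := ly.
Qed.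

Lemma mlogder_LF x y c : Gam x -> Gam y -> is_LF x c -> is_LF y c ->
  mlogder x = mlogder y.
Proof.
wlog yx : x y / mle (mabs y) (mabs x).
  move=> gen hx hy lx ly.
  case: (mle_total hG (group_mabs hG hx) (group_mabs hG hy)) => le; last exact: gen.
  exact/esym/gen.
move=> hx hy lx ly; have [e|ne] := pselect (mabs y = mabs x); last first.
  exact: mlogder_mlt_LF hx hy lx ly (conj yx ne).
(* compare both x and y with k = |x|^2, which is strictly larger and has the same LF *)
have [lax pax] := is_LF_mabs lx.
pose k := mmul (mabs x) (mabs x).
have [lk pk] := is_LF_add_pos lax pax lax pax (z := k) (fun=> erefl).
rewrite maxxx in lk pk.
have k_in : Gam k by apply: (group_mmul hG (group_mabs hG hx) (group_mabs hG hx)).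
have logk w : Gam w -> is_LF w c -> mabs w = mabs x -> mlogder k = mlogder w.
  move=> hw lw ew; apply: (mlogder_mlt_LF k_in hw lk lw).
  rewrite ew (mabs_mgt1 ((mgt1_LF lk).2 pk)).
  exact/mlt_mmul_mgt1/(mgt1_LF lax).
by rewrite -(logk x) // (logk y).
Qed.

Lemma theta_le_mlogder a c x : Gam x -> is_LF x c -> (a <= c)%O ->
  mle (theta D a) (mlogder x).
Proof.
move=> hx lx; rewrite thetaE le_eqVlt => /orP[/eqP ac|ac].
  by rewrite ac (mlogder_LF (group_fund hG c) hx (is_LF_fund R c) lx); exact: mle_refl.
have [lax pax] := is_LF_mabs lx.
have := HD3_mono hx (group_fund hG a); rewrite mabs_fund.
by case/(_ (mlt_fund lax pax ac) (mlt1_fund R a)).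
Qed.

Lemma theta_mgt1 a b : (b < a)%O -> mgt1 (mdiv (theta D a) (theta D b)).
Proof.
move=> ba; rewrite !thetaE.
have := HD3_mono (group_fund hG a) (group_fund hG b); rewrite !mabs_fund.
have pa : 0 < fund R a a by rewrite fund_id ltr01.
case/(_ (mlt_fund (is_LF_fund R a) pa ba) (mlt1_fund R b)) => -[e|//] eLF.
by move: ba; have /eLF := esym e; rewrite !LF_fund => -[->]; rewrite ltxx.
Qed.

Lemma theta_supp_lt a b : (b < a)%O -> msupp_lt (mdiv (theta D a) (theta D b)) a.
Proof.
(* If a <= p for some p in the support, then u := theta^(b)/theta^(a) has LF
   c >= a > b, so u < v := b^-1, and (HD2) together with the bounds on the
   log derivatives of u and v gives 1 <= b^-1. *)
move=> ba p pab; rewrite ltNge; apply/negP => ap.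
have [c [lc pc]] := theta_mgt1 ba.
have ac : (a <= c)%O := le_trans ap (proj2 lc _ pab).
pose u := mdiv (theta D b) (theta D a); pose v := minv (fund R b).
have lu : is_LF u c by apply: (is_LF_opp lc) => q; rewrite /u /mdiv opprB.
have lv : is_LF v b by apply: (is_LF_opp (is_LF_fund R b)).
have [u_in v_in] : Gam u /\ Gam v.
  split; first exact: (group_mdiv hG (theta_in b) (theta_in a)).
  exact: (group_minv hG (group_fund hG b)).
have uv : mle u v.
  have small : msupp_lt v c.
    by move=> q /(proj2 lv) qb; apply: le_lt_trans qb (lt_le_trans ba ac).
  have [lz ez] := is_LF_add_small lc small (z := mdiv v u)
    (fun q => ltac:(rewrite /u /mdiv; ring)).
  by right; exists c; rewrite ez.
have := HD2_mono u_in v_in (is_LF_neq1 lu) (is_LF_neq1 lv) uv.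
rewrite (mlogder_LF v_in (group_fund hG b) lv (is_LF_fund R b)) -thetaE.
move/(mle_trans (mle_mmul2l u (theta_le_mlogder u_in lu ac))).
rewrite (_ : mmul u (theta D a) = theta D b); last first.
  by apply/funext => q; rewrite /u /mmul /mdiv; ring.
move/(mle_mmul2l (minv (theta D b))).
rewrite (_ : mmul _ (theta D b) = one); last first.
  by apply/funext => q; rewrite /mmul /minv /mon1; ring.
rewrite (_ : mmul _ (mmul v _) = v); last by apply/funext => q; rewrite /mmul /minv; ring.
by apply: (not_mle1_LF_lt0 lv); rewrite /v /minv fund_id ltrN10.
Qed.

End HardyType.

Theorem mainTheorem4 (R : realType) (disp : Order.disp_t) (Phi : orderType disp)
    (Gam : set (mon R Phi)) (D : ser R Phi -> ser R Phi)
    (hGam : good_group Gam)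
    (hD : series_derivation Gam D) (hH : hardy_type Gam D)
    (alpha : mon R Phi) (halpha : Gam alpha)
    (hne : forall t, is_theta_hat Gam D t -> alpha <> t) :
  exists! psi : Phi, LF (mdiv alpha (theta D psi)) = Some psi.
Proof.
apply: (exists_unique_LF_div_th hGam halpha (theta_in hGam hD hH)).
- exact: (theta_mgt1 hGam hD hH).
- exact: (theta_supp_lt hGam hD hH).
- by move=> glb; apply: hne glb erefl.
Qed.
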